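(* Let $n\ge2$, $m\ge1$, $\lambda_0\ne0$, $\lambda_1>0$, $\lambda_2\ge0$, $\omega\in\mathbb{R}$, let $f=\frac1n\sum_{i=1}^n r_i(\cdot;\lambda_0,\lambda_1,\lambda_2,m,\omega)$, and assume $f$ attains its minimum $f^*$ on $\mathbb{R}^m$. Consider a PIFO algorithm with initial point $x_0=0$ and sampling probabilities satisfying $p_1\le p_2\le\dots\le p_n$, run on the components $f_i=r_i(\cdot;\lambda_0,\lambda_1,\lambda_2,m,\omega)$. Let $\varepsilon>0$ and let $M\ge1$ be an integer such that $\min_{x\in\mathcal{F}_M}f(x)-f^*\ge9\varepsilon$, and set $N=n(M+1)/4$. Then $\mathbb{E} f(x_t)-f^*\ge\varepsilon$ for every integer $0\le t\le N$.
   Context: For $\omega\in\mathbb{R}$, $B(m,\omega)\in\mathbb{R}^{m\times m}$ is the matrix whose row $l$, for $1\le l\le m-1$, has entry $-1$ in column $m-l$ and entry $1$ in column $m-l+1$, and whose row $m$ is $\omega e_1^\top$; $b_l(m,\omega)^\top$ is its $l$-th row. $\mathcal{L}_i=\{l:1\le l\le m,\ l\equiv i-1\pmod n\}$. $r_1(x)=\lambda_1\sum_{l\in\mathcal{L}_1}(b_l(m,\omega)^\top x)^2+\lambda_2\|x\|_2^2-\lambda_0\langle e_m,x\rangle$ and $r_i(x)=\lambda_1\sum_{l\in\mathcal{L}_i}(b_l(m,\omega)^\top x)^2+\lambda_2\|x\|_2^2$ for $i\ge2$, $x\in\mathbb{R}^m$. $\mathcal{F}_0=\{0\}$, $\mathcal{F}_k=\mathrm{span}\{e_m,\dots,e_{m-k+1}\}$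 for $1\le k\le m$. For $\gamma>0$, $\mathrm{prox}^{\gamma}_g(x)=\arg\min_u\{g(u)+\frac{1}{2\gamma}\|x-u\|_2^2\}$. PIFO algorithm: a probability vector $(p_1,\dots,p_n)$, initial point $x_0$, parameters $\gamma_t>0$; indices $i_1,i_2,\dots$ drawn independently with $\mathbb{P}(i_t=j)=p_j$; iterates $x_t\in\mathrm{span}\{x_0,\dots,x_{t-1},\nabla f_{i_1}(x_0),\dots,\nabla f_{i_t}(x_{t-1}),\mathrm{prox}^{\gamma_1}_{f_{i_1}}(x_0),\dots,\mathrm{prox}^{\gamma_t}_{f_{i_t}}(x_{t-1})\}$ for $t\ge1$. *)

From Stdlib Require Import Reals Lra Lia List Arith Bool.
Import ListNotations.
Open Scope R_scope.

(* Vectors of R^m are functions nat -> R, using coordinates 1..m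
   (values at other indices are irrelevant). *)
Definition vec := nat -> R.

Definition zero_vec : vec := fun _ => 0.

Fixpoint sumR (n : nat) (F : nat -> R) : R :=
  match n with
  | O => 0
  | S k => sumR k F + F k
  end.

Definition sum1 (n : nat) (F : nat -> R) : R := sumR n (fun k => F (S k)).

Definition norm2 (m : nat) (x : vec) : R := sum1 m (fun c => x c ^ 2).

Definition vsub (x y : vec) : vec := fun c => x c - y c.

(* Entry (l, c) of B(m, omega), 1-based. *)
Definition Bentry (m : nat) (omega : R) (l c : nat) : R :=
  if andb (1 <=? l)%nat (l <=? m - 1)%nat then
    (if (c =? m - l)%nat then -1 else if (c =? m - l + 1)%nat then 1 else 0)
  else if (l =? m)%nat then (if (c =? 1)%nat then omega else 0)
  else 0.

Definition bdot (m : nat) (omega : R) (l : nat) (x : vec) : R :=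
  sum1 m (fun c => Bentry m omega l c * x c).

Definition inL (n i l : nat) : bool := (l mod n =? (i - 1) mod n)%nat.

Definition r_comp (n m : nat) (l0 l1 l2 omega : R) (i : nat) (x : vec) : R :=
  l1 * sum1 m (fun l => if inL n i l then (bdot m omega l x) ^ 2 else 0)
  + l2 * norm2 m x
  - (if (i =? 1)%nat then l0 * x m else 0).

Definition f_avg (n m : nat) (l0 l1 l2 omega : R) (x : vec) : R :=
  / INR n * sum1 n (fun i => r_comp n m l0 l1 l2 omega i x).

(* F_k = span{e_m, ..., e_{m-k+1}}: coordinates c <= m-k vanish. *)
Definition in_F (m k : nat) (x : vec) : Prop :=
  forall c, (1 <= c)%nat -> (c <= m - k)%nat -> x c = 0.

Definition is_grad (m : nat) (g : vec -> R) (x v : vec) : Prop :=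
  forall c, (1 <= c <= m)%nat ->
    derivable_pt_lim (fun h => g (fun d => if (d =? c)%nat then x d + h else x d)) 0 (v c).

Definition is_prox (m : nat) (g : vec -> R) (gamma : R) (x u : vec) : Prop :=
  forall v, g u + norm2 m (vsub x u) / (2 * gamma)
            <= g v + norm2 m (vsub x v) / (2 * gamma).

Definition in_span (m : nat) (vs : list vec) (x : vec) : Prop :=
  exists coef : nat -> R, forall c, (1 <= c <= m)%nat ->
    x c = sumR (length vs) (fun k => coef k * nth k vs zero_vec c).

(* An algorithm is given by X : list nat -> vec, where X [i_1; ...; i_t] = x_t.
   PIFO span condition along every index sequence with entries in 1..n. *)
Definition valid_seq (n : nat) (s : list nat) : Prop :=
  forall j, In j s -> (1 <= j <= n)%nat.

Definition PIFO (n m : nat) (comp : nat -> vec -> R) (gamma : nat -> R)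
    (X : list nat -> vec) : Prop :=
  forall s : list nat, valid_seq n s -> (1 <= length s)%nat ->
    let t := length s in
    exists gs us : nat -> vec,
      (forall k, (k < t)%nat ->
         is_grad m (comp (nth k s O)) (X (firstn k s)) (gs k) /\
         is_prox m (comp (nth k s O)) (gamma (S k)) (X (firstn k s)) (us k)) /\
      in_span m (map (fun k => X (firstn k s)) (seq 0 t)
                 ++ map gs (seq 0 t) ++ map us (seq 0 t)) (X s).

(* E[F(i_1,...,i_t)] for i.i.d. indices with P(i = j) = p j, j in 1..n *)
Fixpoint expectation (n : nat) (p : nat -> R) (t : nat) (F : list nat -> R) : R :=
  match t with
  | O => F []
  | S t' => sum1 n (fun j => p j * expectation n p t' (fun s => F (j :: s)))
  end.

From Stdlib Require Import Reals Lra Lia List Arith Bool.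
Import ListNotations.
Open Scope R_scope.

(* Truncating the coordinates 1..j of a vector can only
   decrease r_i, unless row m-j of B(m, omega), the one coupling x_j with
   x_(j+1), belongs to L_i.  For such a component, gradients and proximal
   points at a point vanishing on 1..j again vanish on 1..j ("zero-respecting"
   functions).  Hence along an index sequence s the iterate X s lies in
   F_(level s), where the level grows by one exactly when the sampled index is
   i = level mod n + 1.

   With q_k = p_(k mod n + 1) and w_k = 1/(q_k + 1/n), the
   potential Phi k = w_0 + ... + w_(k-1) satisfies E[Phi (level after t steps)]
   <= t, because q_k w_k <= 1; and Phi k >= k n / 2, because p is nondecreasing.
   Markov's inequality gives P(level >= M+1) <= 1/2 for t <= n(M+1)/4, and on
   the complementary event f(x_t) - f* >= 9 eps. *)

Lemma sumR_ext n F G : (forall k, (k < n)%nat -> F k = G k) -> sumR n F = sumR n G.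
Proof.
  induction n as [|n IH]; intros H; simpl; [reflexivity|].
  rewrite IH, H by (lia || (intros; apply H; lia)); reflexivity.
Qed.

Lemma sumR_le n F G : (forall k, (k < n)%nat -> F k <= G k) -> sumR n F <= sumR n G.
Proof.
  induction n as [|n IH]; intros H; simpl; [lra|].
  pose proof (IH (fun k Hk => H k ltac:(lia))). pose proof (H n ltac:(lia)). lra.
Qed.

Lemma sumR_plus n F G : sumR n (fun k => F k + G k) = sumR n F + sumR n G.
Proof. induction n as [|n IH]; simpl; [lra|]. rewrite IH. lra. Qed.

Lemma sumR_scal n c F : sumR n (fun k => c * F k) = c * sumR n F.
Proof. induction n as [|n IH]; simpl; [lra|]. rewrite IH. lra. Qed.

Lemma sumR_const n c : sumR n (fun _ => c) = INR n * c.
Proof. induction n as [|n IH]; simpl sumR; [simpl; lra|]. rewrite IH, S_INR. lra. Qed.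

Lemma sumR_add a b F : sumR (a + b) F = sumR a F + sumR b (fun j => F (a + j)%nat).
Proof.
  induction b as [|b IH]; simpl; [rewrite Nat.add_0_r; lra|].
  rewrite Nat.add_succ_r; simpl. rewrite IH. lra.
Qed.

Lemma sumR_nonneg n F : (forall k, (k < n)%nat -> 0 <= F k) -> 0 <= sumR n F.
Proof. intros H. rewrite <- (Rmult_0_r (INR n)), <- sumR_const. apply sumR_le, H. Qed.

Lemma sumR_ge_term n F k :
  (forall j, (j < n)%nat -> 0 <= F j) -> (k < n)%nat -> F k <= sumR n F.
Proof.
  induction n as [|n IH]; intros H Hk; [lia|]. simpl.
  pose proof (sumR_nonneg n F (fun j Hj => H j ltac:(lia))).
  destruct (Nat.eq_dec k n) as [->|Hkn]; [lra|].
  pose proof (IH (fun j Hj => H j ltac:(lia)) ltac:(lia)). pose proof (H n ltac:(lia)). lra.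
Qed.

Lemma sumR_delta n c F : (c < n)%nat -> sumR n (fun k => if (k =? c)%nat then F k else 0) = F c.
Proof.
  induction n as [|n IH]; intros H; [lia|]. simpl. destruct (Nat.eq_dec c n) as [->|Hcn].
  - rewrite Nat.eqb_refl, (sumR_ext n _ (fun _ => 0)), sumR_const; [lra|].
    intros k Hk. destruct (Nat.eqb_spec k n); [lia|reflexivity].
  - rewrite IH by lia. destruct (Nat.eqb_spec n c); [lia|lra].
Qed.

Lemma sum1_ext n F G : (forall k, (1 <= k <= n)%nat -> F k = G k) -> sum1 n F = sum1 n G.
Proof. intros H. apply sumR_ext. intros; apply H; lia. Qed.

Lemma sum1_le n F G : (forall k, (1 <= k <= n)%nat -> F k <= G k) -> sum1 n F <= sum1 n G.
Proof. intros H. apply sumR_le. intros; apply H; lia. Qed.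

Lemma sum1_plus n F G : sum1 n (fun k => F k + G k) = sum1 n F + sum1 n G.
Proof. apply sumR_plus. Qed.

Lemma sum1_scal n c F : sum1 n (fun k => c * F k) = c * sum1 n F.
Proof. apply sumR_scal. Qed.

Lemma sum1_delta n c F : (1 <= c <= n)%nat ->
  sum1 n (fun j => if (j =? c)%nat then F j else 0) = F c.
Proof.
  intros Hc. unfold sum1.
  rewrite (sumR_ext n _ (fun k => if (k =? c - 1)%nat then F (S k) else 0)).
  - rewrite sumR_delta by lia. f_equal; lia.
  - intros k Hk. destruct (Nat.eqb_spec (S k) c), (Nat.eqb_spec k (c - 1)); auto; lia.
Qed.

Definition zero_upto (j : nat) (y : vec) : vec := fun d => if (d <=? j)%nat then 0 else y d.

(* x vanishes on the coordinates 1..j, i.e. x lies in F_(m-j). *)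
Definition vanishes_upto (j : nat) (x : vec) : Prop := forall d, (1 <= d <= j)%nat -> x d = 0.

(* g is a function on R^m: it only reads the coordinates 1..m. *)
Definition depends_on (m : nat) (g : vec -> R) : Prop :=
  forall x y, (forall d, (1 <= d <= m)%nat -> x d = y d) -> g x = g y.

Lemma vanishes_upto_le j j' x : (j' <= j)%nat -> vanishes_upto j x -> vanishes_upto j' x.
Proof. intros Hj Hx d Hd. apply Hx. lia. Qed.

Lemma deriv_zero_at_min (G : R -> R) l :
  derivable_pt_lim G 0 l -> (forall h, G 0 <= G h) -> l = 0.
Proof.
  intros HG Hmin.
  pose (pr := exist _ l HG : derivable_pt G 0).
  rewrite <- (derive_pt_eq_0 G 0 l pr HG).
  apply (deriv_minimum G (-1) 1 0 pr); try lra. intros h _ _. apply Hmin.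
Qed.

Section ZeroRespecting.
Variables (m j : nat) (g : vec -> R).
Hypotheses (Hjm : (j <= m)%nat) (g_dep : depends_on m g)
  (g_trunc : forall y, g (zero_upto j y) <= g y).

Lemma grad_vanishes x v : vanishes_upto j x -> is_grad m g x v -> vanishes_upto j v.
Proof.
  intros Hx Hg c Hc. apply (deriv_zero_at_min _ _ (Hg c ltac:(lia))).
  intros h. eapply Rle_trans; [|apply g_trunc]. right. apply g_dep.
  intros d Hd. unfold zero_upto.
  destruct (Nat.leb_spec d j), (Nat.eqb_spec d c); try lia.
  - rewrite Hx by lia. lra.
  - apply Hx. lia.
  - reflexivity.
Qed.

Lemma prox_vanishes gam x u :
  0 < gam -> vanishes_upto j x -> is_prox m g gam x u -> vanishes_upto j u.
Proof.
  intros Hgam Hx Hu c Hc.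
  (* erased mass of u; replacing u by its truncation saves exactly this amount *)
  set (erased := sum1 m (fun d => if (d <=? j)%nat then u d ^ 2 else 0)).
  assert (Hsplit : norm2 m (vsub x (zero_upto j u)) + erased = norm2 m (vsub x u)).
  { unfold norm2, erased. rewrite <- sum1_plus. apply sum1_ext. intros d Hd.
    unfold vsub, zero_upto. destruct (Nat.leb_spec d j); [rewrite Hx by lia|]; ring. }
  assert (Herased : erased <= 0).
  { pose proof (Hu (zero_upto j u)) as Hopt. pose proof (g_trunc u).
    rewrite <- Hsplit in Hopt. unfold Rdiv in Hopt.
    assert (0 < / (2 * gam)) by (apply Rinv_0_lt_compat; lra). nra. }
  assert (Hterm : u c ^ 2 <= erased).
  { pose proof (sumR_ge_term m (fun k => if (S k <=? j)%nat then u (S k) ^ 2 else 0) (c - 1))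
      as T; cbv beta in T.
    replace (S (c - 1)) with c in T by lia. destruct (Nat.leb_spec c j); [|lia].
    apply T; [|lia]. intros k _. destruct (S k <=? j)%nat; [apply pow2_ge_0|lra]. }
  nra.
Qed.

End ZeroRespecting.

Ltac destruct_nat_tests :=
  repeat match goal with
  | |- context [if ?b then _ else _] => let E := fresh "E" in destruct b eqn:E
  end;
  repeat match goal with
  | H : (_ <=? _)%nat = true |- _ => apply Nat.leb_le in H
  | H : (_ <=? _)%nat = false |- _ => apply Nat.leb_gt in H
  | H : (_ =? _)%nat = true |- _ => apply Nat.eqb_eq in H
  | H : (_ =? _)%nat = false |- _ => apply Nat.eqb_neq in H
  | H : (_ && _)%bool = true |- _ => apply andb_true_iff in H; destruct H
  | H : (_ && _)%bool = false |- _ => apply andb_false_iff in H; destruct H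
  end.

Section Components.
Variables (n m : nat) (l0 l1 l2 omega : R).
Hypotheses (Hm : (1 <= m)%nat) (Hl1 : 0 < l1) (Hl2 : 0 <= l2).

(* r_i is a genuine function on R^m (it reads x_m, hence needs m >= 1). *)
Lemma r_comp_depends i : depends_on m (r_comp n m l0 l1 l2 omega i).
Proof.
  intros x y H. unfold r_comp, norm2, bdot.
  rewrite (H m) by lia.
  rewrite (sum1_ext m (fun c => x c ^ 2) (fun c => y c ^ 2)) by (intros; rewrite H; auto).
  erewrite (sum1_ext m (fun l => if inL n i l then _ else 0)); [reflexivity|].
  intros l _. rewrite (sum1_ext m (fun c => _ * x c) (fun c => Bentry m omega l c * y c));
    [reflexivity|]. intros; rewrite H; auto.
Qed.

(* Row l < m of B only involves x_(m-l) and x_(m-l+1), row m only x_1; so away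
   from the straddling row l = m-j a truncation either kills a row or keeps it. *)
Lemma bdot_zero_upto j l y : (1 <= j)%nat -> (1 <= l <= m)%nat -> l <> (m - j)%nat ->
  bdot m omega l (zero_upto j y)
  = (if (m - l + 1 <=? j)%nat then 0 else 1) * bdot m omega l y.
Proof.
  intros Hj Hl Hlj. unfold bdot. rewrite <- sum1_scal. apply sum1_ext. intros c _.
  unfold Bentry, zero_upto. destruct_nat_tests; first [ring | exfalso; lia].
Qed.

(* Truncating the coordinates 1..j decreases r_i unless row m-j lies in L_i;
   for j = m this excludes i = 1, whose linear term reads x_m. *)
Lemma r_comp_zero_upto_le i j y : (1 <= j <= m)%nat -> inL n i (m - j) = false ->
  r_comp n m l0 l1 l2 omega i (zero_upto j y) <= r_comp n m l0 l1 l2 omega i y.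
Proof.
  intros Hj Hi. unfold r_comp, norm2.
  assert (Hquad : sum1 m (fun l => if inL n i l then bdot m omega l (zero_upto j y) ^ 2 else 0)
               <= sum1 m (fun l => if inL n i l then bdot m omega l y ^ 2 else 0)).
  { apply sum1_le. intros l Hl. destruct (inL n i l) eqn:El; [|lra].
    rewrite bdot_zero_upto by (lia || (intros ->; congruence)).
    destruct (m - l + 1 <=? j)%nat; nra. }
  assert (Hnorm : sum1 m (fun c => zero_upto j y c ^ 2) <= sum1 m (fun c => y c ^ 2)).
  { apply sum1_le. intros c _. unfold zero_upto. destruct (c <=? j)%nat; nra. }
  assert (Hlin : (if (i =? 1)%nat then l0 * zero_upto j y m else 0)
               = (if (i =? 1)%nat then l0 * y m else 0)).
  { destruct (Nat.eqb_spec i 1) as [->|]; [|reflexivity].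
    unfold zero_upto. destruct (Nat.leb_spec m j); [|reflexivity].
    replace (m - j)%nat with 0%nat in Hi by lia.
    unfold inL in Hi. rewrite Nat.Div0.mod_0_l, Nat.sub_diag, Nat.Div0.mod_0_l in Hi.
    discriminate Hi. }
  rewrite Hlin. nra.
Qed.

End Components.

(* Sampling i at level k discovers one more coordinate iff row k lies in L_i,
   i.e. iff i = k mod n + 1. *)
Definition next_level (n i k : nat) : nat := (k + if inL n i k then 1 else 0)%nat.

Fixpoint level (n k : nat) (s : list nat) : nat :=
  match s with [] => k | i :: s' => level n (next_level n i k) s' end.

Lemma level_app n k s s' : level n k (s ++ s') = level n (level n k s) s'.
Proof. revert k; induction s; simpl; auto. Qed.

Lemma level_ge n k s : (k <= level n k s)%nat.
Proof.
  revert k; induction s as [|i s IH]; simpl; intros k; [lia|].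
  specialize (IH (next_level n i k)). unfold next_level in *. lia.
Qed.

Lemma inL_succ n i k : (2 <= n)%nat -> inL n i k = true -> inL n i (S k) = false.
Proof.
  intros Hn H. unfold inL in *. apply Nat.eqb_eq in H. apply Nat.eqb_neq. rewrite <- H.
  pose proof (Nat.mod_upper_bound k n ltac:(lia)).
  replace (S k) with (k + 1)%nat by lia. rewrite Nat.Div0.add_mod, (Nat.mod_small 1 n) by lia.
  destruct (Nat.eq_dec (k mod n + 1) n) as [E|E].
  - rewrite E, Nat.Div0.mod_same. lia.
  - rewrite Nat.mod_small; lia.
Qed.

Lemma oracle_vanishes n m l0 l1 l2 omega i K x g u gam :
  (2 <= n)%nat -> (1 <= m)%nat -> 0 < l1 -> 0 <= l2 -> 0 < gam ->
  vanishes_upto (m - K) x ->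
  is_grad m (r_comp n m l0 l1 l2 omega i) x g ->
  is_prox m (r_comp n m l0 l1 l2 omega i) gam x u ->
  vanishes_upto (m - next_level n i K) g /\ vanishes_upto (m - next_level n i K) u.
Proof.
  intros Hn Hm Hl1 Hl2 Hgam Hx Hg Hu.
  set (j := (m - next_level n i K)%nat).
  destruct (Nat.eq_dec j 0) as [Hj0|Hj0].
  { rewrite Hj0. split; intros d Hd; lia. }
  assert (Hrow : inL n i (m - j) = false).
  { unfold j. replace (m - (m - next_level n i K))%nat with (next_level n i K) by lia.
    unfold next_level. destruct (inL n i K) eqn:E.
    - rewrite Nat.add_1_r. apply inL_succ; auto.
    - rewrite Nat.add_0_r. exact E. }
  assert (Hxj : vanishes_upto j x).
  { apply (vanishes_upto_le (m - K)); auto. unfold j, next_level. lia. }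
  pose proof (r_comp_depends n m l0 l1 l2 omega Hm i) as Hdep.
  assert (Htrunc : forall y, r_comp n m l0 l1 l2 omega i (zero_upto j y)
                             <= r_comp n m l0 l1 l2 omega i y)
    by (intros; apply r_comp_zero_upto_le; auto; lia).
  split.
  - apply (grad_vanishes m j _ ltac:(lia) Hdep Htrunc x); auto.
  - apply (prox_vanishes m j _ ltac:(lia) Htrunc gam x); auto.
Qed.

Lemma firstn_S_nth (s : list nat) k :
  (k < length s)%nat -> firstn (S k) s = firstn k s ++ [nth k s O].
Proof.
  revert k; induction s as [|a s IH]; simpl; intros k H; [lia|].
  destruct k; simpl; [reflexivity|]. f_equal. apply IH. lia.
Qed.

Lemma span_vanishes m j vs x : (j <= m)%nat ->
  (forall v, In v vs -> vanishes_upto j v) -> in_span m vs x -> vanishes_upto j x.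
Proof.
  intros Hjm Hvs [coef Hx] d Hd. rewrite Hx by lia.
  rewrite (sumR_ext _ _ (fun _ => 0)), sumR_const; [lra|].
  intros k Hk. rewrite (Hvs (nth k vs zero_vec)); [ring|apply nth_In; auto|auto].
Qed.

Section Iterates.
Variables (n m : nat) (l0 l1 l2 omega : R) (gamma : nat -> R) (X : list nat -> vec).
Hypotheses (Hn : (2 <= n)%nat) (Hm : (1 <= m)%nat) (Hl1 : 0 < l1) (Hl2 : 0 <= l2)
  (Hgamma : forall t, (1 <= t)%nat -> 0 < gamma t)
  (HX0 : forall c, X [] c = 0)
  (HX : PIFO n m (r_comp n m l0 l1 l2 omega) gamma X).

Lemma iterate_vanishes s : valid_seq n s -> vanishes_upto (m - level n 0 s) (X s).
Proof.
  remember (length s) as t eqn:Ht. revert s Ht.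
  induction t as [t IH] using lt_wf_ind. intros s Ht Hv.
  destruct t as [|t].
  { destruct s; [|discriminate]. intros d _. apply HX0. }
  destruct (HX s Hv ltac:(lia)) as (gs & us & Horacle & Hspan).
  assert (Hpre : forall k, valid_seq n (firstn k s)).
  { intros k i Hi. apply Hv. rewrite <- (firstn_skipn k s). apply in_or_app; auto. }
  assert (Hlev : forall k, (level n 0 (firstn k s) <= level n 0 s)%nat).
  { intros k. rewrite <- (firstn_skipn k s) at 2. rewrite level_app. apply level_ge. }
  assert (Hprefix : forall k, (k < length s)%nat ->
            vanishes_upto (m - level n 0 (firstn k s)) (X (firstn k s))).
  { intros k Hk. apply (IH k); auto; [lia|]. rewrite firstn_length_le; lia. }
  assert (Hcalls : forall k, (k < length s)%nat ->
            vanishes_upto (m - level n 0 s) (gs k) /\ vanishes_upto (m - level n 0 s) (us k)).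
  { intros k Hk. destruct (Horacle k Hk) as [Hg Hu].
    destruct (oracle_vanishes n m l0 l1 l2 omega (nth k s O) (level n 0 (firstn k s))
                (X (firstn k s)) (gs k) (us k) (gamma (S k))) as [Hgv Huv]; auto.
    { apply Hgamma. lia. }
    pose proof (Hlev (S k)) as HlevS.
    rewrite firstn_S_nth, level_app in HlevS by lia. simpl in HlevS.
    split; (eapply vanishes_upto_le; [|eassumption]); lia. }
  refine (span_vanishes m _ _ _ (Nat.le_sub_l _ _) _ Hspan).
  intros v Hin.
  apply in_app_or in Hin as [Hin|Hin]; [|apply in_app_or in Hin as [Hin|Hin]];
    apply in_map_iff in Hin as (k & <- & Hk); apply in_seq in Hk.
  - eapply vanishes_upto_le; [|apply Hprefix; lia]. pose proof (Hlev k). lia.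
  - apply Hcalls. lia.
  - apply Hcalls. lia.
Qed.

End Iterates.

Section Sampling.
Variables (n : nat) (p : nat -> R).
Hypotheses (Hn : (2 <= n)%nat)
  (Hp_nonneg : forall j, (1 <= j <= n)%nat -> 0 <= p j)
  (Hp_sum : sum1 n p = 1).

Lemma expectation_mono t F G : (forall s, valid_seq n s -> F s <= G s) ->
  expectation n p t F <= expectation n p t G.
Proof.
  revert F G; induction t as [|t IH]; intros F G H; simpl.
  - apply H. intros j [].
  - apply sum1_le. intros j Hj. apply Rmult_le_compat_l; [apply Hp_nonneg; auto|].
    apply IH. intros s Hs. apply H. intros i [<-|Hi]; auto.
Qed.

Lemma expectation_affine t a b F :
  expectation n p t (fun s => a + b * F s) = a + b * expectation n p t F.
Proof.
  revert a b F; induction t as [|t IH]; intros a b F; simpl; [reflexivity|].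
  rewrite (sum1_ext n _ (fun j => a * p j + b * (p j * expectation n p t (fun s => F (j :: s))))).
  - rewrite sum1_plus, sum1_scal, sum1_scal, Hp_sum. ring.
  - intros j _. rewrite (IH a b (fun s => F (j :: s))). ring.
Qed.

Lemma INR_n_pos : 0 < INR n.
Proof. apply lt_0_INR. lia. Qed.

(* Probability of the index that advances the level from k. *)
Definition q (k : nat) : R := p (k mod n + 1).

Lemma q_nonneg k : 0 <= q k.
Proof. apply Hp_nonneg. pose proof (Nat.mod_upper_bound k n ltac:(lia)). lia. Qed.

Lemma inL_advances j k : (1 <= j <= n)%nat -> inL n j k = (j =? k mod n + 1)%nat.
Proof.
  intros Hj. unfold inL. rewrite (Nat.mod_small (j - 1)) by lia.
  destruct (Nat.eqb_spec (k mod n) (j - 1)), (Nat.eqb_spec j (k mod n + 1)); auto; lia.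
Qed.

(* Weights of the potential: w_k is at most 1/q_k, yet stays finite. *)
Definition w (k : nat) : R := / (q k + / INR n).

Lemma w_pos k : 0 < w k.
Proof.
  unfold w. pose proof (Rinv_0_lt_compat _ INR_n_pos). pose proof (q_nonneg k).
  apply Rinv_0_lt_compat. lra.
Qed.

Lemma q_w_le_1 k : q k * w k <= 1.
Proof.
  pose proof (w_pos k) as Hw. unfold w in *.
  pose proof (Rinv_0_lt_compat _ INR_n_pos). pose proof (q_nonneg k).
  apply (Rmult_le_reg_l (q k + / INR n)); [lra|].
  rewrite (Rmult_comm (q k)), <- Rmult_assoc, Rinv_r by lra. lra.
Qed.

(* Tangent line of the convex map a |-> 1/a at a = 2/n, evaluated at a = q_k + 1/n. *)
Lemma w_tangent k : 3 * INR n / 4 - INR n * INR n / 4 * q k <= w k.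
Proof.
  pose proof (w_pos k) as Hw. unfold w in *. pose proof INR_n_pos.
  set (N := INR n) in *. set (a := q k + / N) in *.
  assert (Ha : 0 < a) by (unfold a; pose proof (q_nonneg k); pose proof (Rinv_0_lt_compat N H); lra).
  replace (q k) with (a - / N) by (unfold a; ring).
  apply (Rmult_le_reg_l a); [exact Ha|]. rewrite Rinv_r by lra.
  assert (0 <= (1 - a * N / 2) ^ 2) by apply pow2_ge_0.
  replace (a * (3 * N / 4 - N * N / 4 * (a - / N))) with (a * N - a * a * N * N / 4) by (field; lra).
  nra.
Qed.

Definition Phi (k : nat) : R := sumR k w.

(* Each sampled index raises the expected potential by at most q_k w_k <= 1. *)
Lemma expected_potential t k : expectation n p t (fun s => Phi (level n k s)) <= Phi k + INR t.
Proof.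
  revert k; induction t as [|t IH]; intros k; [simpl; lra|].
  simpl expectation. cbn [level].
  eapply Rle_trans.
  { apply sum1_le. intros j Hj. apply Rmult_le_compat_l; [apply Hp_nonneg; auto|].
    apply (IH (next_level n j k)). }
  rewrite (sum1_ext n _ (fun j => (Phi k + INR t) * p j
                                  + w k * (if (j =? k mod n + 1)%nat then p j else 0))).
  - pose proof (Nat.mod_upper_bound k n ltac:(lia)).
    rewrite sum1_plus, sum1_scal, sum1_scal, Hp_sum, sum1_delta by lia.
    pose proof (q_w_le_1 k). unfold q in *. rewrite S_INR. lra.
  - intros j Hj. unfold next_level. rewrite inL_advances by auto.
    destruct (Nat.eqb_spec j (k mod n + 1)).
    + rewrite Nat.add_1_r. unfold Phi; simpl sumR. ring.
    + rewrite Nat.add_0_r. ring.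
Qed.

Lemma Phi_le k k' : (k <= k')%nat -> Phi k <= Phi k'.
Proof.
  intros H. unfold Phi. replace k' with (k + (k' - k))%nat by lia. rewrite sumR_add.
  pose proof (sumR_nonneg (k' - k) (fun j => w (k + j)) (fun j _ => Rlt_le _ _ (w_pos _))).
  lra.
Qed.

Section Monotone.
Hypothesis (Hp_mono : forall j, (1 <= j)%nat -> (j < n)%nat -> p j <= p (S j)).

Lemma p_le_shift d i : (1 <= i)%nat -> (i + d <= n)%nat -> p i <= p (i + d)%nat.
Proof.
  induction d as [|d IH]; intros Hi Hd; [rewrite Nat.add_0_r; lra|].
  eapply Rle_trans; [apply IH; lia|].
  rewrite Nat.add_succ_r. apply Hp_mono; lia.
Qed.

Lemma prefix_mass_le b : (b <= n)%nat -> INR n * sum1 b p <= INR b.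
Proof.
  intros Hb. destruct b as [|b']; [unfold sum1; simpl; lra|].
  set (b := S b') in *.
  assert (Hlow : sum1 b p <= INR b * p b).
  { unfold sum1. rewrite <- sumR_const. apply sumR_le. intros k Hk.
    replace b with (S k + (b - S k))%nat by lia. apply p_le_shift; lia. }
  assert (Hsplit : sum1 n p = sum1 b p + sumR (n - b) (fun j => p (S (b + j)))).
  { unfold sum1. replace n with (b + (n - b))%nat at 1 by lia. apply sumR_add. }
  assert (Hhigh : INR (n - b) * p b <= sumR (n - b) (fun j => p (S (b + j)))).
  { rewrite <- sumR_const. apply sumR_le. intros k Hk.
    replace (S (b + k)) with (b + S k)%nat by lia. apply p_le_shift; lia. }
  rewrite minus_INR in Hhigh by lia.
  assert (0 <= INR b) by apply pos_INR.
  assert (INR b <= INR n) by (apply le_INR; lia).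
  assert (0 <= (INR n - INR b) * (INR b * p b - sum1 b p)) by (apply Rmult_le_pos; lra).
  nra.
Qed.

Lemma cyclic_mass_le k : INR n * sumR k q <= INR k.
Proof.
  induction k as [k IH] using lt_wf_ind.
  assert (Hfirst : forall j, (j < n)%nat -> q j = p (S j)).
  { intros j Hj. unfold q. rewrite Nat.mod_small by lia. f_equal. lia. }
  destruct (Nat.lt_ge_cases k n).
  - rewrite (sumR_ext k q (fun j => p (S j))) by (intros; apply Hfirst; lia).
    apply prefix_mass_le. lia.
  - replace k with (n + (k - n))%nat at 1 by lia. rewrite sumR_add.
    rewrite (sumR_ext n q (fun j => p (S j))) by auto.
    rewrite (sumR_ext (k - n) (fun j => q (n + j)%nat) q).
    2:{ intros j _. unfold q. replace (n + j)%nat with (j + 1 * n)%nat by lia.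
        rewrite Nat.Div0.mod_add. reflexivity. }
    fold (sum1 n p). rewrite Hp_sum.
    pose proof (IH (k - n)%nat ltac:(lia)). rewrite minus_INR in * by lia. nra.
Qed.

(* Summing the tangent bound and using the cyclic mass bound: Phi k >= k n / 2. *)
Lemma Phi_lower_bound k : INR k * INR n / 2 <= Phi k.
Proof.
  unfold Phi. eapply Rle_trans; [|apply sumR_le; intros j _; apply w_tangent].
  rewrite (sumR_ext k _ (fun j => 3 * INR n / 4 + (- (INR n / 4)) * (INR n * q j)))
    by (intros; unfold Rdiv; ring).
  rewrite sumR_plus, sumR_const, sumR_scal, sumR_scal.
  pose proof (cyclic_mass_le k). pose proof INR_n_pos. nra.
Qed.

(* Markov's inequality for the potential: within n k / 4 steps, level k is
   reached with probability at most 1/2. *)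
Lemma reach_prob_le_half t k : (1 <= k)%nat -> INR t <= INR n * INR k / 4 ->
  expectation n p t (fun s => if (k <=? level n 0 s)%nat then 1 else 0) <= 1 / 2.
Proof.
  intros Hk Ht.
  set (reached := fun s => if (k <=? level n 0 s)%nat then 1 else 0).
  assert (Hmarkov : forall s, valid_seq n s -> 0 + Phi k * reached s <= Phi (level n 0 s)).
  { intros s _. unfold reached. destruct (Nat.leb_spec k (level n 0 s)).
    - rewrite Rplus_0_l, Rmult_1_r. apply Phi_le. lia.
    - rewrite Rmult_0_r, Rplus_0_l. apply (Phi_le 0). lia. }
  pose proof (expectation_mono t _ _ Hmarkov) as Hmono.
  rewrite expectation_affine in Hmono.
  pose proof (expected_potential t 0) as Hpot. unfold Phi at 2 in Hpot. simpl sumR in Hpot.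
  pose proof (Phi_lower_bound k). pose proof INR_n_pos.
  assert (0 < INR k) by (apply lt_0_INR; lia).
  assert (HPhi : 0 < Phi k) by nra.
  apply (Rmult_le_reg_l (Phi k)); [exact HPhi|]. lra.
Qed.

End Monotone.
End Sampling.

Theorem lemma2p5 (n m : nat) (l0 l1 l2 omega : R)
  (Hn : (2 <= n)%nat) (Hm : (1 <= m)%nat)
  (Hl0 : l0 <> 0) (Hl1 : 0 < l1) (Hl2 : 0 <= l2)
  (fstar : R)
  (Hmin : (exists xs : vec, f_avg n m l0 l1 l2 omega xs = fstar) /\
          (forall x : vec, fstar <= f_avg n m l0 l1 l2 omega x))
  (p : nat -> R)
  (Hp_nonneg : forall j, (1 <= j <= n)%nat -> 0 <= p j)
  (Hp_sum : sum1 n p = 1)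
  (Hp_mono : forall j, (1 <= j)%nat -> (j < n)%nat -> p j <= p (S j))
  (gamma : nat -> R) (Hgamma : forall t, (1 <= t)%nat -> 0 < gamma t)
  (X : list nat -> vec)
  (HX0 : forall c, X [] c = 0)
  (HX : PIFO n m (r_comp n m l0 l1 l2 omega) gamma X)
  (eps : R) (Heps : 0 < eps) (M : nat) (HM : (1 <= M)%nat)
  (HFM : forall x : vec, in_F m M x -> f_avg n m l0 l1 l2 omega x - fstar >= 9 * eps) :
  forall t : nat, INR t <= INR n * INR (M + 1) / 4 ->
    expectation n p t (fun s => f_avg n m l0 l1 l2 omega (X s)) - fstar >= eps.
Proof.
  intros t Ht.
  set (reached := fun s => if (M + 1 <=? level n 0 s)%nat then 1 else 0).
  (* before level M+1 is reached, x_t lies in F_M and is 9 eps-suboptimal *)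
  assert (Hgap : forall s, valid_seq n s ->
            (fstar + 9 * eps) + (- (9 * eps)) * reached s <= f_avg n m l0 l1 l2 omega (X s)).
  { intros s Hs. unfold reached. destruct (Nat.leb_spec (M + 1) (level n 0 s)).
    - pose proof (proj2 Hmin (X s)). lra.
    - assert (HF : in_F m M (X s)).
      { intros c Hc1 Hc2.
        apply (iterate_vanishes n m l0 l1 l2 omega gamma X Hn Hm Hl1 Hl2 Hgamma HX0 HX s Hs).
        lia. }
      pose proof (HFM _ HF). lra. }
  pose proof (expectation_mono n p Hp_nonneg t _ _ Hgap) as Hmono.
  rewrite expectation_affine in Hmono by exact Hp_sum.
  pose proof (reach_prob_le_half n p Hn Hp_nonneg Hp_sum Hp_mono t (M + 1) ltac:(lia) Ht)
    as Hreach.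
  fold reached in Hreach. nra.
Qed.
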